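(* Let $G\in\Gamma$ be twin-free with $\|G\|<\frac1{15}(9+4\sqrt6)$ (the Schur norm of $\begin{bmatrix}1&1&0\\1&1&1\\0&1&0\end{bmatrix}$). Then (1) $G$ has no induced subgraph isomorphic to the bipartite graph with biadjacency matrix $\begin{bmatrix}1&1&0\\1&1&1\end{bmatrix}$; and (2) every vertex of $G$ has degree at most $3$.
   Context: $\Gamma$ is the collection of all bipartite graphs $G\subseteq R\times C$ with $|R|,|C|\in\{1,2,\dots\}\cup\{\aleph_0\}$; the biadjacency matrix $M(G)$ has $(i,j)$ entry $1$ iff $(r_i,c_j)$ is an edge. $\|G\|$ is the Schur norm $\|M(G)\|_\bullet=\sup\{\|M(G)\bullet X\|:\|X\|\le1\}$ (entrywise product, operator norm on $\ell^2$ spaces over $\mathbb F\in\{\mathbb R,\mathbb C\}$). Induced subgraphs are $G\cap(R_0\times C_0)$; isomorphisms of bipartite graphs may swap the two sides. Two vertices are twins if they have the same neighbour sets; twin-free means no two distinct vertices are twins. *)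

From mathcomp Require Import all_boot all_order all_algebra.
From mathcomp Require Import reals complex.
Import GRing.Theory Num.Theory.
Set Implicit Arguments. Unset Strict Implicit. Unset Printing Implicit Defensive.
Local Open Scope ring_scope.

(* A bipartite graph G ⊆ R × C with |R|,|C| ∈ {1,2,...} ∪ {ℵ0}.
   Row vertices are r_i, column vertices c_j; the size [Some k] means k.+1
   vertices (indices 0..k), [None] means ℵ0 vertices (all of nat).
   [bedge i j] says (r_i, c_j) is an edge (only meaningful on vertices). *)
Record bigraph := BiGraph {
  nrows : option nat;
  ncols : option nat;
  bedge : nat -> nat -> bool }.

Definition in_size (n : option nat) (i : nat) : bool :=
  if n is Some k then (i <= k)%N else true.

Definition is_row (G : bigraph) (i : nat) := in_size (nrows G) i.
Definition is_col (G : bigraph) (j : nat) := in_size (ncols G) j.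

Definition biadj (F : numFieldType) (G : bigraph) (i j : nat) : F :=
  (bedge G i j)%:R.

(* ||A|| <= c for the operator ℓ^2(C) -> ℓ^2(R) given by the (possibly
   infinite) matrix A indexed by P × Q: the bilinear form of A is bounded by
   c on (finitely supported) vectors of norm <= 1 (finitely supported vectors
   are dense in ℓ^2, so this is exactly the operator norm bound). *)
Definition opnorm_le (F : numFieldType) (P Q : pred nat)
    (A : nat -> nat -> F) (c : F) : Prop :=
  forall (s t : seq nat) (y x : nat -> F),
    uniq s -> uniq t -> all P s -> all Q t ->
    \sum_(i <- s) `|y i| ^+ 2 <= 1 ->
    \sum_(j <- t) `|x j| ^+ 2 <= 1 ->
    `|\sum_(i <- s) \sum_(j <- t) y i * A i j * x j| <= c.

Definition schur_le (F : numFieldType) (G : bigraph) (c : F) : Prop :=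
  forall X : nat -> nat -> F,
    opnorm_le (is_row G) (is_col G) X 1 ->
    opnorm_le (is_row G) (is_col G) (fun i j => biadj F G i j * X i j) c.

(* ||G||_• < b  (the supremum is < b iff it is <= some c < b). *)
Definition schur_lt (F : numFieldType) (G : bigraph) (b : F) : Prop :=
  exists2 c : F, c < b & schur_le G c.

Definition twin_free (G : bigraph) : Prop :=
  (forall i i', is_row G i -> is_row G i' -> i != i' ->
     exists j, is_col G j /\ bedge G i j != bedge G i' j) /\
  (forall j j', is_col G j -> is_col G j' -> j != j' ->
     exists i, is_row G i /\ bedge G i j != bedge G i j').

Definition H_mat (i : 'I_2) (j : 'I_3) : bool :=
  ~~ ((val i == 0%N) && (val j == 2%N)).

(* G has an induced subgraph isomorphic to H; isomorphisms may swap sides: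
   either H's rows go to row vertices of G and H's columns to column vertices,
   or H's rows go to column vertices and H's columns to row vertices. *)
Definition has_induced_H (G : bigraph) : Prop :=
  (exists (r : 'I_2 -> nat) (c : 'I_3 -> nat),
     [/\ injective r, injective c, (forall i, is_row G (r i)),
         (forall j, is_col G (c j)) &
         forall i j, bedge G (r i) (c j) = H_mat i j]) \/
  (exists (r : 'I_2 -> nat) (c : 'I_3 -> nat),
     [/\ injective r, injective c, (forall i, is_col G (r i)),
         (forall j, is_row G (c j)) &
         forall i j, bedge G (c j) (r i) = H_mat i j]).

(* Every vertex has degree at most d (degrees may a priori be infinite, so
   we bound the size of every finite set of neighbours). *)
Definition max_degree_le (G : bigraph) (d : nat) : Prop :=
  (forall i (s : seq nat), is_row G i -> uniq s ->
     all (fun j => is_col G j && bedge G i j) s -> (size s <= d)%N) /\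
  (forall j (s : seq nat), is_col G j -> uniq s ->
     all (fun i => is_row G i && bedge G i j) s -> (size s <= d)%N).

Definition c0 (R : realType) : R := (9 + 4 * Num.sqrt 6) / 15.
Definition c0C (R : realType) : R[i] := Complex (c0 R) 0.

(* If G contains the bipartite graph H, its first two columns are twins in H, so
   twin-freeness yields a row of G separating them; together with H it induces
   one of the 3x3 patterns M_leaf, M_cross. If some row has four neighbours,
   twin-freeness and the absence of H force three of them to have private
   neighbours, inducing the 4x4 pattern M_spider. The Schur norm of G bounds
   u^T (M o X) v for every induced pattern M, contraction X and unit vectors
   u, v (extend everything by zero); explicit such triples show that each of
   the three patterns has Schur norm at least c0. Columns are handled by
   transposing G. *)

From mathcomp Require Import all_boot all_order all_algebra fingroup perm.
From mathcomp Require Import reals complex.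
From mathcomp Require Import ring lra.
From Stdlib Require Import Classical_Prop.
Import Order.TTheory GRing.Theory Num.Theory.
Set Implicit Arguments. Unset Strict Implicit. Unset Printing Implicit Defensive.

Definition transpose (G : bigraph) : bigraph :=
  BiGraph (ncols G) (nrows G) (fun i j => bedge G j i).

Lemma twin_free_transpose G : twin_free G -> twin_free (transpose G).
Proof. by case. Qed.

Lemma opnorm_le_transpose (F : numFieldType) (P Q : pred nat)
    (A : nat -> nat -> F) (c : F) :
  opnorm_le P Q A c -> opnorm_le Q P (fun i j => A j i) c.
Proof.
move=> hA s t y x us ut Ps Qt hy hx; have := hA t s x y ut us Qt Ps hx hy.
rewrite exchange_big /=; congr (`|_| <= c)%R.
by apply: eq_bigr => j _; apply: eq_bigr => i _; ring.
Qed.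

Lemma schur_le_transpose (F : numFieldType) G (c : F) :
  schur_le G c -> schur_le (transpose G) c.
Proof. by move=> hG X /opnorm_le_transpose /hG /opnorm_le_transpose. Qed.

Lemma schur_lt_transpose (F : numFieldType) G (b : F) :
  schur_lt G b -> schur_lt (transpose G) b.
Proof. by case=> c ltcb /schur_le_transpose; exists c. Qed.

Definition induces (G : bigraph) m n (M : 'I_m -> 'I_n -> bool) : Prop :=
  exists (r : 'I_m -> nat) (c : 'I_n -> nat),
    [/\ injective r, injective c, forall k, is_row G (r k),
        forall l, is_col G (c l) & forall k l, bedge G (r k) (c l) = M k l].

Definition distinct_rows m n (M : 'I_m -> 'I_n -> bool) :=
  forall k k', (forall l, M k l = M k' l) -> k = k'.

Lemma distinct_rows_of_uniq m n (E : nat -> nat -> bool) :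
  uniq [seq [seq E k l | l <- iota 0 n] | k <- iota 0 m] ->
  distinct_rows (fun (k : 'I_m) (l : 'I_n) => E k l).
Proof.
move=> uE k k' Ekk'; apply: val_inj; apply/eqP.
rewrite -(nth_uniq [::] _ _ uE) ?size_map ?size_iota ?ltn_ord //.
rewrite !(nth_map 0) ?size_iota ?ltn_ord // !nth_iota ?ltn_ord // !add0n.
apply/eqP/eq_in_map => l; rewrite mem_iota add0n => /andP[_ ltl].
exact: (Ekk' (Ordinal ltl)).
Qed.

Lemma induces_intro G m n (M : 'I_m -> 'I_n -> bool) (r : 'I_m -> nat) (c : 'I_n -> nat) :
  distinct_rows M -> injective c -> (forall k, is_row G (r k)) ->
  (forall l, is_col G (c l)) -> (forall k l, bedge G (r k) (c l) = M k l) ->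
  induces G M.
Proof.
move=> dM ic hr hc hM; exists r, c; split=> // k k' rkk'.
by apply: dM => l; rewrite -!hM rkk'.
Qed.

Lemma nth_injective (T : eqType) (x0 : T) (s : seq T) :
  uniq s -> injective (fun k : 'I_(size s) => nth x0 s k).
Proof. by move=> us k k' /eqP; rewrite nth_uniq // => /eqP/val_inj. Qed.

Definition entry (rows : seq (seq nat)) (k l : nat) : bool :=
  nth 0 (nth [::] rows k) l == 1.

Definition leaf_rows := [:: [:: 1; 1; 0]; [:: 1; 1; 1]; [:: 0; 1; 0]].
Definition cross_rows := [:: [:: 1; 1; 0]; [:: 1; 1; 1]; [:: 1; 0; 1]].
Definition spider_rows :=
  [:: [:: 1; 1; 1; 1]; [:: 1; 0; 0; 0]; [:: 0; 1; 0; 0]; [:: 0; 0; 1; 0]].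

Definition M_leaf (k l : 'I_3) := entry leaf_rows k l.
Definition M_cross (k l : 'I_3) := entry cross_rows k l.
Definition M_spider (k l : 'I_4) := entry spider_rows k l.

Lemma induces_entry G m n rows (r : 'I_m -> nat) (c : 'I_n -> nat) :
  uniq [seq [seq entry rows k l | l <- iota 0 n] | k <- iota 0 m] ->
  uniq [seq [seq entry rows k l | k <- iota 0 m] | l <- iota 0 n] ->
  (forall k, is_row G (r k)) -> (forall l, is_col G (c l)) ->
  (forall k l, bedge G (r k) (c l) = entry rows k l) ->
  induces G (fun (k : 'I_m) (l : 'I_n) => entry rows k l).
Proof.
move=> /distinct_rows_of_uniq dM /distinct_rows_of_uniq dMT hr hc hM.
apply: (induces_intro dM) => // l l' cll'.
by apply: dMT => k; rewrite -!hM cll'.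
Qed.

Lemma induces_H_plus_row G (p0 p1 x q0 q1 q2 : nat) :
  all (is_row G) [:: p0; p1; x] -> all (is_col G) [:: q0; q1; q2] ->
  [&& bedge G p0 q0, bedge G p0 q1 & ~~ bedge G p0 q2] ->
  [&& bedge G p1 q0, bedge G p1 q1 & bedge G p1 q2] ->
  ~~ bedge G x q0 -> bedge G x q1 -> induces G M_leaf \/ induces G M_cross.
Proof.
move=> /and4P[r0 r1 rx _] /and4P[c0 c1 c2 _] /and3P[e00 e01 e02] /and3P[e10 e11 e12].
move=> ex0 ex1.
have rows_ok : forall k : 'I_3, is_row G (nth 0 [:: p0; p1; x] k).
  by move=> [[|[|[|a]]] ha].
case ex2 : (bedge G x q2); [right | left].
- apply: (induces_entry (r := fun k => nth 0 [:: p0; p1; x] k)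
                        (c := fun l => nth 0 [:: q1; q0; q2] l)) => //.
  + by move=> [[|[|[|a]]] ha].
  + by move=> [[|[|[|a]]] ha] [[|[|[|b]]] hb] //=;
      rewrite ?e00 ?e01 ?(negbTE e02) ?e10 ?e11 ?e12 ?(negbTE ex0) ?ex1 ?ex2.
- apply: (induces_entry (r := fun k => nth 0 [:: p0; p1; x] k)
                        (c := fun l => nth 0 [:: q0; q1; q2] l)) => //.
  + by move=> [[|[|[|a]]] ha].
  + by move=> [[|[|[|a]]] ha] [[|[|[|b]]] hb] //=;
      rewrite ?e00 ?e01 ?(negbTE e02) ?e10 ?e11 ?e12 ?(negbTE ex0) ?ex1 ?ex2.
Qed.

Lemma induces_H_extends G :
  twin_free G -> induces G H_mat -> induces G M_leaf \/ induces G M_cross.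
Proof.
move=> [_ twin_cols] [r [c [_ ic hr hc hrc]]].
pose o1 : 'I_3 := Ordinal (isT : 1 < 3).
have q01 : c ord0 != c o1 by apply/eqP => /ic.
have [x [rx]] := twin_cols _ _ (hc ord0) (hc o1) q01.
have rows_x : all (is_row G) [:: r ord0; r ord_max; x] by rewrite /= !hr rx.
case ex1 : (bedge G x (c o1)) => /= ex0.
- apply: (@induces_H_plus_row _ (r ord0) (r ord_max) x (c ord0) (c o1) (c ord_max)) => //.
  + by rewrite /= !hc.
  + by rewrite !hrc.
  + by rewrite !hrc.
  + by move: ex0; rewrite eqb_id.
- apply: (@induces_H_plus_row _ (r ord0) (r ord_max) x (c o1) (c ord0) (c ord_max)) => //.
  + by rewrite /= !hc.
  + by rewrite !hrc.
  + by rewrite !hrc.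
  + by rewrite ex1.
  + by move: ex0; rewrite eqbF_neg negbK.
Qed.

Lemma exists_all_but_one (T : eqType) (t : T) (P : T -> Prop) :
  (forall a b, a != b -> P a \/ P b) -> exists a0, forall a, a != a0 -> P a.
Proof.
move=> P_pairs; case: (classic (exists a0, ~ P a0)) => [[a0 nPa0] | all_P].
- by exists a0 => a /P_pairs[// | /nPa0].
- by exists t => a _; apply: NNPP => nPa; apply: all_P; exists a.
Qed.

Section HighDegree.
Variables (G : bigraph) (i : nat) (col : 'I_4 -> nat).
Hypotheses (tfG : twin_free G) (noH : ~ induces G H_mat) (row_i : is_row G i).
Hypotheses (col_inj : injective col) (col_col : forall k, is_col G (col k)).
Hypothesis adj_i : forall k, bedge G i (col k).

Definition private x k := is_row G x /\ forall l, bedge G x (col l) = (l == k).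

Lemma private_of_separating x k k' :
  is_row G x -> bedge G x (col k) -> ~~ bedge G x (col k') -> private x k.
Proof.
move=> rx xk xk'; split=> // l; case: eqP => [-> // | /eqP lk].
apply/negbTE/negP => xl; apply: noH.
have lk' : l != k' by apply: contraNneq xk' => <-.
have kk' : k != k' by apply: contraNneq xk' => <-.
apply: (induces_intro (r := fun a : 'I_2 => nth 0 [:: x; i] a)
                      (c := fun b : 'I_3 => nth 0 [:: col k; col l; col k'] b)).
- exact: (@distinct_rows_of_uniq 2 3 (fun a b => ~~ ((a == 0) && (b == 2)))).
- apply: (@nth_injective _ 0 [:: col k; col l; col k']).
  by rewrite /= !inE !(inj_eq col_inj) !negb_or eq_sym lk kk' lk'.
- by move=> [[|[|a]] ha].
- by move=> [[|[|[|a]]] ha] //=; apply: col_col.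
- by move=> [[|[|a]] ha] [[|[|[|b]]] hb] //=; rewrite ?xk ?xl ?(negbTE xk') ?adj_i.
Qed.

Lemma private_somewhere k k' :
  k != k' -> (exists x, private x k) \/ (exists x, private x k').
Proof.
move=> kk'; have [|x [rx]] := tfG.2 _ _ (col_col k) (col_col k').
  by rewrite (inj_eq col_inj).
case xk : (bedge G x (col k)); rewrite eq_sym => xk'.
- left; exists x; apply: (private_of_separating (k' := k')) => //.
  by move: xk'; rewrite eqb_id.
- right; exists x; apply: (private_of_separating (k' := k)) => //.
  + by move: xk'; rewrite eqbF_neg negbK.
  + by rewrite xk.
Qed.

Lemma induces_spider : induces G M_spider.
Proof.
have [k0 private_k] := exists_all_but_one ord0 private_somewhere.
(* [sigma] sends the column k0, which may lack a private neighbour, to the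
   last column of [M_spider]. *)
pose sigma := tperm k0 ord_max.
have sigma_private k : k != ord_max -> exists x, private x (sigma k).
  move=> kmax; apply: private_k; apply: contra kmax => /eqP skk0.
  by rewrite -(tpermK k0 ord_max k) skk0 tpermL.
have [x0 [r0 p0]] := sigma_private (Ordinal (isT : 0 < 4)) isT.
have [x1 [r1 p1]] := sigma_private (Ordinal (isT : 1 < 4)) isT.
have [x2 [r2 p2]] := sigma_private (Ordinal (isT : 2 < 4)) isT.
apply: (induces_entry (r := fun k => nth 0 [:: i; x0; x1; x2] k)
                      (c := fun l => col (sigma l))) => //.
- by move=> [[|[|[|[|a]]]] ha].
- by move=> [[|[|[|[|a]]]] ha] [[|[|[|[|b]]]] hb] //=;
    rewrite ?adj_i ?p0 ?p1 ?p2 ?(inj_eq perm_inj).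
Qed.

End HighDegree.

Lemma row_degree_le3 G : twin_free G -> ~ induces G H_mat -> ~ induces G M_spider ->
  forall i (s : seq nat), is_row G i -> uniq s ->
    all (fun j => is_col G j && bedge G i j) s -> size s <= 3.
Proof.
move=> tfG noH noS i s ri us hs; rewrite leqNgt; apply/negP => big_s.
pose col (k : 'I_4) := nth 0 s k.
have col_ok (k : 'I_4) : is_col G (col k) && bedge G i (col k).
  by apply: (allP hs); apply: mem_nth; apply: leq_trans (ltn_ord k) big_s.
apply: noS; apply: (@induces_spider G i col) => // [k k' | k | k].
- by move/eqP; rewrite nth_uniq // ?(leq_trans (ltn_ord _) big_s) // => /eqP/val_inj.
- by case/andP: (col_ok k).
- by case/andP: (col_ok k).
Qed.

Local Open Scope ring_scope.

Section SchurLowerBounds.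
Variable R : realType.
Local Open Scope complex_scope.
Local Notation Re := complex.Re.
Local Notation Im := complex.Im.

Lemma sum_delta m (k0 : 'I_m) (F : 'I_m -> R) : \sum_k (k0 == k)%:R * F k = F k0.
Proof.
rewrite (bigD1 k0) //= eqxx mul1r big1 ?addr0 // => k.
by rewrite eq_sym => /negbTE->; rewrite mul0r.
Qed.

Lemma sum_seq_delta (s : seq nat) (x : nat) (F : nat -> R) :
  uniq s -> \sum_(i <- s) (i == x)%:R * F i = (x \in s)%:R * F x.
Proof.
elim: s => [|y s IHs] /=; first by rewrite big_nil mul0r.
case/andP=> ys us; rewrite big_cons IHs // in_cons.
have [<-|] := eqVneq y x; last by rewrite mul0r add0r.
by rewrite (negbTE ys) mul1r mul0r addr0.
Qed.

Definition contraction m n (X : 'I_m -> 'I_n -> R) :=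
  forall (a : 'I_m -> R) (b : 'I_n -> R),
    2 * \sum_k \sum_l a k * X k l * b l <= \sum_k a k ^+ 2 + \sum_l b l ^+ 2.

Definition orthonormal_cols m n (X : 'I_m -> 'I_n -> R) :=
  forall l l', \sum_k X k l * X k l' = (l == l')%:R.

Lemma orthonormal_contraction m n (X : 'I_m -> 'I_n -> R) :
  orthonormal_cols X -> contraction X.
Proof.
move=> oX a b; pose Xb k := \sum_l X k l * b l.
have norm_Xb : \sum_k Xb k ^+ 2 = \sum_l b l ^+ 2.
  have -> : \sum_l b l ^+ 2 = \sum_l \sum_l' b l * b l' * \sum_k X k l * X k l'.
    apply: eq_bigr => l _; under eq_bigr => l' _ do rewrite oX mulrC.
    by rewrite sum_delta expr2.
  under eq_bigr => k _ do rewrite expr2 mulr_suml.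
  under eq_bigr => k _ do under eq_bigr => l _ do rewrite mulr_sumr.
  rewrite exchange_big; apply: eq_bigr => l _; rewrite exchange_big.
  apply: eq_bigr => l' _; rewrite mulr_sumr; apply: eq_bigr => k _; ring.
have -> : \sum_k \sum_l a k * X k l * b l = \sum_k a k * Xb k.
  by apply: eq_bigr => k _; rewrite mulr_sumr; apply: eq_bigr => l _; rewrite mulrA.
rewrite -norm_Xb mulr_sumr -big_split /=; apply: ler_sum => k _.
by have := sqr_ge0 (a k - Xb k); nra.
Qed.

Definition householder n (w : 'I_n -> R) (k l : 'I_n) : R :=
  (k == l)%:R - 2 * w k * w l / \sum_j w j ^+ 2.

Lemma householder_orthonormal n (w : 'I_n -> R) :
  \sum_j w j ^+ 2 != 0 -> orthonormal_cols (householder w).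
Proof.
move=> N0 l l'.
have hE k l0 : householder w k l0 = (l0 == k)%:R - w k * (2 * w l0 / \sum_j w j ^+ 2).
  by rewrite /householder eq_sym; ring.
have E (d d' x a b : R) :
  (d - x * a) * (d' - x * b) = d * d' - d * (x * b) - d' * (x * a) + a * b * x ^+ 2.
  by ring.
under eq_bigr do rewrite !hE E.
rewrite !big_split /= !sumrN !sum_delta -mulr_sumr eq_sym.
by field.
Qed.

Definition extend m (r : 'I_m -> nat) (u : 'I_m -> R) (i : nat) : R :=
  \sum_k (i == r k)%:R * u k.

Definition embed m n (r : 'I_m -> nat) (c : 'I_n -> nat)
    (X : 'I_m -> 'I_n -> R) (i j : nat) : R :=
  extend r (fun k => extend c (X k) j) i.

Lemma extend_at m (r : 'I_m -> nat) u k : injective r -> extend r u (r k) = u k.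
Proof.
by move=> r_inj; rewrite /extend; under eq_bigr do rewrite (inj_eq r_inj); rewrite sum_delta.
Qed.

Lemma embed_at m n (r : 'I_m -> nat) (c : 'I_n -> nat) X k l :
  injective r -> injective c -> embed r c X (r k) (c l) = X k l.
Proof. by move=> r_inj c_inj; rewrite /embed !extend_at. Qed.

Definition contraction_on (A : nat -> nat -> R) :=
  forall (s t : seq nat) (a b : nat -> R), uniq s -> uniq t ->
    2 * \sum_(i <- s) \sum_(j <- t) a i * A i j * b j <=
    \sum_(i <- s) a i ^+ 2 + \sum_(j <- t) b j ^+ 2.

Definition restrict m (r : 'I_m -> nat) (s : seq nat) (a : nat -> R) (k : 'I_m) : R :=
  \sum_(i <- s) (i == r k)%:R * a i.

Lemma sum_indicator_le1 m (r : 'I_m -> nat) (i : nat) :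
  injective r -> \sum_k (i == r k)%:R <= 1 :> R.
Proof.
move=> r_inj; case: (pickP (fun k => i == r k)) => [k0 /eqP -> | none].
  by under eq_bigr do rewrite (inj_eq r_inj) -[_%:R]mulr1; rewrite sum_delta.
by rewrite big1 // => k _; rewrite none.
Qed.

Lemma restrict_sumsq m (r : 'I_m -> nat) (s : seq nat) (a : nat -> R) :
  injective r -> uniq s -> \sum_k restrict r s a k ^+ 2 <= \sum_(i <- s) a i ^+ 2.
Proof.
move=> r_inj us.
have sq k : restrict r s a k ^+ 2 = \sum_(i <- s) (i == r k)%:R * a i ^+ 2.
  by rewrite /restrict !sum_seq_delta //; case: (r k \in s); rewrite ?mul1r ?mul0r ?expr0n.
under eq_bigr do rewrite sq; rewrite exchange_big /=; apply: ler_sum => i _.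
rewrite -mulr_suml -[leRHS]mul1r; apply: ler_wpM2r; first exact: sqr_ge0.
exact: sum_indicator_le1.
Qed.

Lemma embed_form m n (r : 'I_m -> nat) (c : 'I_n -> nat) (X : 'I_m -> 'I_n -> R)
    (s t : seq nat) (a b : nat -> R) :
  \sum_(i <- s) \sum_(j <- t) a i * embed r c X i j * b j =
  \sum_k \sum_l restrict r s a k * X k l * restrict c t b l.
Proof.
pose F i j k l := (i == r k)%:R * a i * X k l * ((j == c l)%:R * b j).
transitivity (\sum_(i <- s) \sum_(j <- t) \sum_k \sum_l F i j k l).
  apply: eq_bigr => i _; apply: eq_bigr => j _.
  rewrite /embed /extend mulr_sumr mulr_suml; apply: eq_bigr => k _.
  rewrite /extend !mulr_sumr mulr_suml; apply: eq_bigr => l _; rewrite /F; ring.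
under eq_bigr => i _ do rewrite exchange_big; rewrite exchange_big.
under eq_bigr => k _ do under eq_bigr => i _ do rewrite exchange_big.
under eq_bigr => k _ do rewrite exchange_big.
apply: eq_bigr => k _; apply: eq_bigr => l _.
rewrite /restrict !mulr_suml; apply: eq_bigr => i _.
by rewrite mulr_sumr; apply: eq_bigr => j _; rewrite /F; ring.
Qed.

Lemma embed_contraction m n (r : 'I_m -> nat) (c : 'I_n -> nat) (X : 'I_m -> 'I_n -> R) :
  injective r -> injective c -> contraction X -> contraction_on (embed r c X).
Proof.
move=> r_inj c_inj cX s t a b us ut; rewrite embed_form.
by apply: le_trans (cX _ _) _; apply: lerD; apply: restrict_sumsq.
Qed.

Lemma sum_normr2 (s : seq nat) (f : nat -> R) :
  \sum_(i <- s) `|f i| ^+ 2 = \sum_(i <- s) f i ^+ 2.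
Proof. by apply: eq_bigr => i _; rewrite real_normK ?num_real. Qed.

Lemma contraction_opnorm_le (P Q : pred nat) (A : nat -> nat -> R) :
  contraction_on A -> opnorm_le P Q A 1.
Proof.
move=> cA s t y x us ut _ _; rewrite !sum_normr2 => hy hx.
set z := \sum_(i <- s) _.
have := cA s t (fun i => z * y i) x us ut.
have -> : \sum_(i <- s) \sum_(j <- t) z * y i * A i j * x j = z ^+ 2.
  rewrite expr2 {2}/z mulr_sumr; apply: eq_bigr => i _.
  by rewrite mulr_sumr; apply: eq_bigr => j _; rewrite !mulrA.
under eq_bigr do rewrite exprMn; rewrite -mulr_sumr => h.
have z2 : z ^+ 2 <= 1 by have := sqr_ge0 z; nra.
by rewrite ler_norml; apply/andP; split; nra.
Qed.

Lemma sum_normC2 (s : seq nat) (y : nat -> R[i]) :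
  \sum_(i <- s) `|y i| ^+ 2 = (\sum_(i <- s) (Re (y i) ^+ 2 + Im (y i) ^+ 2))%:C.
Proof.
rewrite raddf_sum; apply: eq_bigr => i _.
by rewrite normc_def -rmorphXn sqr_sqrtr // addr_ge0 ?sqr_ge0.
Qed.

Lemma Re_mul_real (u v : R[i]) (r : R) :
  Re (u * r%:C * v) = Re u * r * Re v + (- Im u) * r * Im v.
Proof. by case: u => a b; case: v => c d /=; ring. Qed.

(* Pairing the form z with its conjugate turns |z|^2 into the sum of two real
   bilinear forms of A, one on real parts and one on imaginary parts. *)
Lemma contraction_opnorm_le_complex (P Q : pred nat) (A : nat -> nat -> R) :
  contraction_on A -> opnorm_le P Q (fun i j => (A i j)%:C) 1.
Proof.
move=> cA s t y x us ut _ _; rewrite !sum_normC2 -[1]/(1%:C) !lecR => hy hx.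
set z := \sum_(i <- s) _; pose w := conjc z.
set N := Re z ^+ 2 + Im z ^+ 2.
have N_ge0 : 0 <= N by rewrite addr_ge0 ?sqr_ge0.
have N_wz : N = \sum_(i <- s) \sum_(j <- t) Re (w * y i) * A i j * Re (x j)
              + \sum_(i <- s) \sum_(j <- t) (- Im (w * y i)) * A i j * Im (x j).
  have -> : N = Re (w * z) by rewrite /N /w; case: (z) => a b /=; ring.
  rewrite mulr_sumr raddf_sum -big_split; apply: eq_bigr => i _ /=.
  rewrite mulr_sumr raddf_sum -big_split; apply: eq_bigr => j _ /=.
  by rewrite mulrA -Re_mul_real !mulrA.
have norm_wy i : Re (w * y i) ^+ 2 + (- Im (w * y i)) ^+ 2 =
                 N * (Re (y i) ^+ 2 + Im (y i) ^+ 2).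
  by rewrite /N /w; case: (z) => a b; case: (y i) => c d /=; ring.
have := cA s t _ _ us ut; have := cA s t _ _ us ut.
move=> /(_ (fun i => Re (w * y i)) (fun j => Re (x j))) c1.
move=> /(_ (fun i => - Im (w * y i)) (fun j => Im (x j))) c2.
have y_part : \sum_(i <- s) Re (w * y i) ^+ 2 + \sum_(i <- s) (- Im (w * y i)) ^+ 2
    = N * \sum_(i <- s) (Re (y i) ^+ 2 + Im (y i) ^+ 2).
  by rewrite -big_split mulr_sumr; apply: eq_bigr => i _; exact: norm_wy.
have x_part : \sum_(j <- t) Re (x j) ^+ 2 + \sum_(j <- t) Im (x j) ^+ 2
    = \sum_(j <- t) (Re (x j) ^+ 2 + Im (x j) ^+ 2) by rewrite big_split.
have N_le1 : N <= 1.
  have : N * \sum_(i <- s) (Re (y i) ^+ 2 + Im (y i) ^+ 2) <= N.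
    by rewrite -[leRHS]mulr1; apply: ler_wpM2l.
  lra.
have -> : Normc.normc z = Num.sqrt N by rewrite /N; case: (z).
by rewrite -sqrtr1 ler_sqrt.
Qed.

Definition pattern_value m n (M : 'I_m -> 'I_n -> bool) (u : 'I_m -> R)
    (X : 'I_m -> 'I_n -> R) (v : 'I_n -> R) : R :=
  \sum_k \sum_l u k * ((M k l)%:R * X k l) * v l.

Lemma embed_pattern_form G m n (M : 'I_m -> 'I_n -> bool) r c u X v :
  injective r -> injective c -> (forall k l, bedge G (r k) (c l) = M k l) ->
  \sum_(i <- map r (index_enum 'I_m)) \sum_(j <- map c (index_enum 'I_n))
    extend r u i * (biadj R G i j * embed r c X i j) * extend c v j =
  pattern_value M u X v.
Proof.
move=> r_inj c_inj hM; rewrite big_map; apply: eq_bigr => k _.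
by rewrite big_map; apply: eq_bigr => l _; rewrite /biadj hM !extend_at // embed_at.
Qed.

Lemma extend_sumsq m (r : 'I_m -> nat) (u : 'I_m -> R) :
  injective r -> \sum_(i <- map r (index_enum 'I_m)) extend r u i ^+ 2 = \sum_k u k ^+ 2.
Proof. by move=> r_inj; rewrite big_map; apply: eq_bigr => k _; rewrite extend_at. Qed.

Lemma map_index_enum_uniq m (r : 'I_m -> nat) :
  injective r -> uniq (map r (index_enum 'I_m)).
Proof. by move=> r_inj; rewrite map_inj_uniq // index_enum_uniq. Qed.

Lemma schur_le_pattern_value G m n (M : 'I_m -> 'I_n -> bool) u X v (b : R) :
  induces G M -> contraction X -> \sum_k u k ^+ 2 <= 1 -> \sum_l v l ^+ 2 <= 1 ->
  schur_le G b -> pattern_value M u X v <= b.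
Proof.
move=> [r [c [r_inj c_inj hr hc hM]]] cX hu hv sG.
have /sG := contraction_opnorm_le (P := is_row G) (Q := is_col G)
  (embed_contraction r_inj c_inj cX).
move=> /(_ _ _ (extend r u) (extend c v)
          (map_index_enum_uniq r_inj) (map_index_enum_uniq c_inj)).
rewrite (embed_pattern_form _ _ _ r_inj c_inj hM) !sum_normr2 !extend_sumsq //.
move=> /(_ _ _ hu hv) h.
apply: le_trans (ler_norm _) (h _ _).
- by apply/allP => _ /mapP[k _ ->].
- by apply/allP => _ /mapP[l _ ->].
Qed.

Lemma normC_real (x : R) : `|x%:C| = `|x|%:C.
Proof. by rewrite normc_def /= expr0n addr0 sqrtr_sqr. Qed.

Lemma schur_le_pattern_value_complex G m n (M : 'I_m -> 'I_n -> bool) u X v (b : R[i]) :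
  induces G M -> contraction X -> \sum_k u k ^+ 2 <= 1 -> \sum_l v l ^+ 2 <= 1 ->
  schur_le G b -> (pattern_value M u X v)%:C <= b.
Proof.
move=> [r [c [r_inj c_inj hr hc hM]]] cX hu hv sG.
have /sG := contraction_opnorm_le_complex (P := is_row G) (Q := is_col G)
  (embed_contraction r_inj c_inj cX).
move=> /(_ _ _ (fun i => (extend r u i)%:C) (fun j => (extend c v j)%:C)
          (map_index_enum_uniq r_inj) (map_index_enum_uniq c_inj)).
have form : \sum_(i <- map r (index_enum 'I_m)) \sum_(j <- map c (index_enum 'I_n))
    (extend r u i)%:C * (biadj R[i] G i j * (embed r c X i j)%:C) * (extend c v j)%:C
    = (pattern_value M u X v)%:C.
  rewrite -(embed_pattern_form _ _ _ r_inj c_inj hM) [RHS]rmorph_sum; apply: eq_bigr => i _.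
  by rewrite [RHS]rmorph_sum; apply: eq_bigr => j _; rewrite /biadj !rmorphM /= rmorph_nat.
have sq0 (s : seq nat) (f : nat -> R) :
    \sum_(i <- s) (f i ^+ 2 + 0 ^+ 2) = \sum_(i <- s) f i ^+ 2.
  by apply: eq_bigr => i _; rewrite expr0n addr0.
rewrite !sum_normC2 /= -[1]/(1%:C) !lecR !sq0 !extend_sumsq // form normC_real.
move=> /(_ _ _ hu hv) h.
apply: le_trans (h _ _); first by rewrite lecR ler_norm.
- by apply/allP => _ /mapP[k _ ->].
- by apply/allP => _ /mapP[l _ ->].
Qed.

Definition schur_lt_RC G (b : R) :=
  schur_lt (F := R) G b \/ schur_lt (F := R[i]) G (b%:C).

Lemma schur_lt_RC_transpose G b : schur_lt_RC G b -> schur_lt_RC (transpose G) b.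
Proof. by case=> h; [left | right]; apply: schur_lt_transpose. Qed.

Definition schur_lower_bound m n (M : 'I_m -> 'I_n -> bool) (b : R) :=
  exists u X v, [/\ contraction X, \sum_k u k ^+ 2 <= 1, \sum_l v l ^+ 2 <= 1
                   & b <= pattern_value M u X v].

Lemma schur_lt_not_induces G m n (M : 'I_m -> 'I_n -> bool) b :
  schur_lt_RC G b -> schur_lower_bound M b -> ~ induces G M.
Proof.
move=> ltG [u [X [v [cX hu hv le_b]]]] iM; move: le_b; apply/negP; rewrite -ltNge.
case: ltG => [[c ltcb sG] | [c ltcb sG]].
- exact: le_lt_trans (schur_le_pattern_value iM cX hu hv sG) ltcb.
- by rewrite -ltcR; exact: le_lt_trans (schur_le_pattern_value_complex iM cX hu hv sG) ltcb.
Qed.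

Lemma householder_pattern_value n (M : 'I_n -> 'I_n -> bool) (sg u : 'I_n -> R) :
  pattern_value M u (householder (fun k => sg k * u k)) u =
  \sum_k (M k k)%:R * u k ^+ 2 - 2 / (\sum_j (sg j * u j) ^+ 2) *
    \sum_k \sum_l (M k l)%:R * sg k * sg l * u k ^+ 2 * u l ^+ 2.
Proof.
rewrite /pattern_value /householder; move: (\sum_j (sg j * u j) ^+ 2) => N.
rewrite mulr_sumr -sumrB; apply: eq_bigr => k _.
have E l : u k * ((M k l)%:R * ((k == l)%:R - 2 * (sg k * u k) * (sg l * u l) / N)) * u l =
    (k == l)%:R * ((M k l)%:R * u k * u l) -
    2 / N * ((M k l)%:R * sg k * sg l * u k ^+ 2 * u l ^+ 2) by ring.
by rewrite (eq_bigr _ (fun l _ => E l)) sumrB sum_delta -mulr_sumr -mulrA expr2.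
Qed.

End SchurLowerBounds.

Section Certificates.
Variable R : realType.

Lemma sqrt6_sqr : Num.sqrt 6 ^+ 2 = 6 :> R.
Proof. by rewrite sqr_sqrtr. Qed.

Lemma sqrt6_bounds : 0 <= Num.sqrt 6 :> R /\ Num.sqrt 6 <= 49 / 20 :> R.
Proof. by have := sqrt6_sqr; have := sqrtr_ge0 (6 : R); split; nra. Qed.

Lemma eq_mod_sqrt6 (x y q : R) : x - y = (Num.sqrt 6 ^+ 2 - 6) * q -> x = y.
Proof. by rewrite sqrt6_sqr subrr mul0r => /eqP; rewrite subr_eq0 => /eqP. Qed.

Lemma c0_le : c0 R <= 94 / 75.
Proof. by have [_ ?] := sqrt6_bounds; rewrite /c0; lra. Qed.

(* Up to signs of rows and columns, [cross_mx] is the rotation x |-> q x q^-1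
   for the quaternion q = 1 + 2i + k, and [spider_mx] is x |-> p x q / 6 for
   p = i - j - 2k, q = -1 + i - 2j. The vectors are rational unit vectors close
   to the top singular vectors of the corresponding Schur products. *)
Definition cross_u (k : 'I_3) : R := nth 0 [:: 6; 7; 6] k / 11.
Definition cross_mx (k l : 'I_3) : R :=
  nth 0 (nth [::] [:: [:: 2; 1; -2]; [:: 1; 2; 2]; [:: 2; -2; 1]] k) l / 3.
Definition cross_v (l : 'I_3) : R := nth 0 [:: 7; 6; 6] l / 11.

Lemma cross_orthonormal : orthonormal_cols cross_mx.
Proof.
by move=> [[|[|[|a]]] ha] [[|[|[|b]]] hb] //=;
  rewrite !big_ord_recl big_ord0 /cross_mx /=; lra.
Qed.

Lemma cross_lower_bound : schur_lower_bound M_cross (c0 R).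
Proof.
exists cross_u, cross_mx, cross_v; split.
- exact: orthonormal_contraction cross_orthonormal.
- by rewrite !big_ord_recl big_ord0 /cross_u /=; lra.
- by rewrite !big_ord_recl big_ord0 /cross_v /=; lra.
- have := c0_le; rewrite /pattern_value !big_ord_recl !big_ord0.
  by rewrite /cross_u /cross_mx /cross_v /=; lra.
Qed.

Definition spider_u (k : 'I_4) : R := nth 0 [:: 11; 5; 5; 5] k / 14.
Definition spider_mx (k l : 'I_4) : R :=
  nth 0 (nth [::] [:: [:: 3; 3; 3; 3]; [:: 5; -1; -1; -3];
                      [:: -1; 5; -1; -3]; [:: -1; -1; 5; -3]] k) l / 6.
Definition spider_v (l : 'I_4) : R := nth 0 [:: 21; 21; 21; 11] l / 38.

Lemma spider_orthonormal : orthonormal_cols spider_mx.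
Proof.
by move=> [[|[|[|[|a]]]] ha] [[|[|[|[|b]]]] hb] //=;
  rewrite !big_ord_recl big_ord0 /spider_mx /=; lra.
Qed.

Lemma spider_lower_bound : schur_lower_bound M_spider (c0 R).
Proof.
exists spider_u, spider_mx, spider_v; split.
- exact: orthonormal_contraction spider_orthonormal.
- by rewrite !big_ord_recl big_ord0 /spider_u /=; lra.
- by rewrite !big_ord_recl big_ord0 /spider_v /=; lra.
- have := c0_le; rewrite /pattern_value !big_ord_recl !big_ord0.
  by rewrite /spider_u /spider_mx /spider_v /=; lra.
Qed.

(* The optimal certificate for [M_leaf]: u = v = sqrt d for the weights d below,
   and X the Householder reflection in the vector (sign k * u k). It attains c0
   exactly, so c0 is the Schur norm of M_leaf. *)
Definition leaf_weight (s : R) (k : 'I_3) : R :=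
  nth 0 [:: (6 + s) / 30; (8 + 3 * s) / 30; (16 - 4 * s) / 30] k.
Definition leaf_sign (s : R) (k : 'I_3) : R := nth 0 [:: -1; 1; - (1 + s / 2)] k.
Definition leaf_u (k : 'I_3) : R := Num.sqrt (leaf_weight (Num.sqrt 6) k).
Definition leaf_mx := householder (fun k => leaf_sign (Num.sqrt 6) k * leaf_u k).

Lemma leaf_u_sqr k : leaf_u k ^+ 2 = leaf_weight (Num.sqrt 6) k.
Proof.
have [s0 s3] := sqrt6_bounds; rewrite sqr_sqrtr //.
by case: k => [[|[|[|a]]] ha] //; rewrite /leaf_weight /=; lra.
Qed.

Lemma leaf_norm : \sum_j (leaf_sign (Num.sqrt 6) j * leaf_u j) ^+ 2 = (3 + Num.sqrt 6) / 3.
Proof.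
under eq_bigr do rewrite exprMn leaf_u_sqr.
rewrite !big_ord_recl big_ord0 /leaf_sign /leaf_weight /=.
by apply: (eq_mod_sqrt6 (q := - Num.sqrt 6 / 30)); field.
Qed.

Lemma leaf_value : pattern_value M_leaf leaf_u leaf_mx leaf_u = c0 R.
Proof.
have [s0 _] := sqrt6_bounds.
rewrite /leaf_mx householder_pattern_value leaf_norm.
rewrite !big_ord_recl !big_ord0 !leaf_u_sqr /leaf_sign /leaf_weight /c0 /=.
apply: (eq_mod_sqrt6 (q := (- 6 * Num.sqrt 6 - 16) / (75 * (3 + Num.sqrt 6)))).
by field; lra.
Qed.

Lemma leaf_lower_bound : schur_lower_bound M_leaf (c0 R).
Proof.
have [s0 _] := sqrt6_bounds.
have u_sumsq : \sum_k leaf_u k ^+ 2 <= 1.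
  by under eq_bigr do rewrite leaf_u_sqr; rewrite !big_ord_recl big_ord0 /leaf_weight /=; lra.
exists leaf_u, leaf_mx, leaf_u; split; rewrite ?leaf_value //.
apply/orthonormal_contraction/householder_orthonormal.
by rewrite leaf_norm; apply: lt0r_neq0; lra.
Qed.

End Certificates.

Lemma not_induces_H (R : realType) G :
  twin_free G -> schur_lt_RC G (c0 R) -> ~ induces G H_mat.
Proof.
move=> tfG ltG /(induces_H_extends tfG) [].
  exact: schur_lt_not_induces ltG (leaf_lower_bound R).
exact: schur_lt_not_induces ltG (cross_lower_bound R).
Qed.

Unset Implicit Arguments. Set Strict Implicit.

Theorem lemma6p5 (R : realType) (G : bigraph) :
  twin_free G ->
  (schur_lt (F := R) G (c0 R) \/ schur_lt (F := R[i]) G (c0C R)) ->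
  ~ has_induced_H G /\ max_degree_le G 3.
Proof.
move=> tfG ltG; have ltGT := schur_lt_RC_transpose ltG.
have tfGT := twin_free_transpose tfG.
have noH := not_induces_H tfG ltG; have noHT := not_induces_H tfGT ltGT.
split; first by case.
have noS := schur_lt_not_induces ltG (spider_lower_bound R).
have noST := schur_lt_not_induces ltGT (spider_lower_bound R).
by split; [exact: (row_degree_le3 tfG noH noS) | exact: (row_degree_le3 tfGT noHT noST)].
Qed.
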